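(* Let $r\ge1$ and let $\mu=\langle\mu_1,\dots,\mu_{r+1}\rangle\in\mathbb{Z}^{r+1}$ with $\mu_1+\cdots+\mu_{r+1}=0$. Then the map of the previous theorem (juggling sequence $\mapsto$ multiset of roots $\varepsilon_i-\varepsilon_{i+j}$, one for each throw at time $i$ to height $j$) is a bijection between $\mathrm{JS}(\langle\mu_1,\dots,\mu_r\rangle,\langle\mu_1+\cdots+\mu_r\rangle,r)$ and $P_{A_r}(\mu)$; in particular \[K_{A_r}(\mu)=\mathsf{js}(\langle\mu_1,\dots,\mu_r\rangle,\langle\mu_1+\cdots+\mu_r\rangle,r).\]
   Context: A (magic) juggling state is a finitely supported integer vector $\mathbf{s}=\langle s_1,s_2,\dots\rangle$ indexed by heights $1,2,\dots$ (trailing zeros omitted). A juggling sequence of length $n$ from $\mathbf{a}$ to $\mathbf{b}$ is a sequence $(\mathbf{s}_0,\dots,\mathbf{s}_n)$ with $\mathbf{s}_0=\mathbf{a}$, $\mathbf{s}_n=\mathbf{b}$, such that for each $1\le i\le n$ there are nonnegative integers $c^{(i)}_1,c^{(i)}_2,\dots$ (finitely many nonzero) with $\sum_k c^{(i)}_k=(\mathbf{s}_{i-1})_1$ and $(\mathbf{s}_i)_k=(\mathbf{s}_{i-1})_{k+1}+c^{(i)}_k$ for all $k\ge1$; $c^{(i)}_j$ is the number of throws at time $i$ to height $j$. $\mathrm{JS}(\mathbf{a},\mathbf{b},n)$ is the set of these, $\mathsf{js}(\mathbf{a},\mathbf{b},n)$ its cardinality. $\varepsilon_1,\dots,\varepsilon_{r+1}$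 is the standard basis of $\mathbb{R}^{r+1}$, $\Phi^+_{A_r}=\{\varepsilon_i-\varepsilon_j:1\le i<j\le r+1\}$, $P_{A_r}(\mu)$ is the set of finite multisets of elements of $\Phi^+_{A_r}$ summing to $\mu$ (empty multiset allowed for $\mu=0$), and $K_{A_r}(\mu)=|P_{A_r}(\mu)|$. *)

From HB Require Import structures.
From mathcomp Require Import all_boot all_order all_algebra.
Set Implicit Arguments. Unset Strict Implicit. Unset Printing Implicit Defensive.
Import Order.TTheory GRing.Theory Num.Theory.
Local Open Scope ring_scope.

(* A (magic) juggling state <s_1, s_2, ...> is represented by a function
   s : nat -> int with  s k = s_(k+1)  (the entry at height k.+1). *)
Definition state := nat -> int.

Definition finsupp_state (s : state) : Prop :=
  exists N : nat, forall k : nat, (N <= k)%N -> s k = 0.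

(* One juggling step from s to t: nonnegative throw counts c (c k = number
   of throws to height k.+1), finitely many nonzero, summing to s_1,
   with t_h = s_(h+1) + c_h for all heights h. *)
Definition juggling_step (s t : state) : Prop :=
  exists (c : nat -> nat) (N : nat),
    (forall k : nat, (N <= k)%N -> c k = 0%N) /\
    (\sum_(k < N) c k)%N%:Z = s 0%N /\
    (forall k : nat, t k = s k.+1 + (c k)%:Z).

Definition nth_state (ss : seq state) (i : nat) : state :=
  nth (fun _ => 0) ss i.

Definition is_js (a b : state) (n : nat) (ss : seq state) : Prop :=
  size ss = n.+1 /\ nth_state ss 0 = a /\ nth_state ss n = b /\
  (forall i : nat, (i < n)%N -> juggling_step (nth_state ss i) (nth_state ss i.+1)).

Definition eps (r : nat) (i : 'I_r.+1) : 'rV[int]_r.+1 := delta_mx 0 i.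

(* A finite multiset of positive roots of A_r: multiplicity function on pairs
   (p, q) (0-based), standing for eps_(p+1) - eps_(q+1); it must vanish
   outside p < q. *)
Definition mset (r : nat) := {ffun 'I_r.+1 * 'I_r.+1 -> nat}.

Definition in_P (r : nat) (mu : 'rV[int]_r.+1) (m : mset r) : Prop :=
  (forall pq : 'I_r.+1 * 'I_r.+1, ~~ (pq.1 < pq.2)%N -> m pq = 0%N) /\
  \sum_(pq : 'I_r.+1 * 'I_r.+1) (eps pq.1 - eps pq.2) *+ m pq = mu.

(* The map: one root eps_i - eps_(i+j) for each throw at time i to height j.
   Time i = p+1, height j = q-p; the number of such throws is
   c^(i)_j = (s_i)_j - (s_(i-1))_(j+1). *)
Definition js_to_mset (r : nat) (ss : seq state) : mset r :=
  [ffun pq : 'I_r.+1 * 'I_r.+1 =>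
     if (pq.1 < pq.2)%N then
       `| nth_state ss pq.1.+1 (pq.2 - pq.1).-1 - nth_state ss pq.1 (pq.2 - pq.1) |%N
     else 0%N].

Definition init_state (r : nat) (mu : 'rV[int]_r.+1) : state :=
  fun k => if (k < r)%N then mu 0 (inord k) else 0.

Definition final_state (r : nat) (mu : 'rV[int]_r.+1) : state :=
  fun k => if k == 0%N then \sum_(i < r.+1 | (i < r)%N) mu 0 i else 0.

Definition has_card (T : Type) (A : T -> Prop) (N : nat) : Prop :=
  exists f : 'I_N -> T, injective f /\ (forall x, A x <-> exists i, f i = x).

From HB Require Import structures.
From mathcomp Require Import all_boot all_order all_algebra.
From Stdlib Require Import FunctionalExtensionality.
From mathcomp Require Import zify.
Import Order.TTheory GRing.Theory Num.Theory.
Local Open Scope ring_scope.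

Set Implicit Arguments. Unset Strict Implicit. Unset Printing Implicit Defensive.

(* A multiset m of positive roots is read as a juggling pattern: a root
   eps_(p+1) - eps_(q+1) is a throw at time p+1 landing at time q+1.  Replaying
   these throws from <mu_1, ..., mu_r> gives r steps whose throw counts are
   nonnegative, and the step condition (balls thrown = s_1) at time j is exactly
   the j-th coordinate of the weight equation, the last coordinate matching the
   final state because sum mu = 0.  Conversely every juggling sequence is the
   replay of its own throws: the throw counts are state differences, and no ball
   thrown at time i can land after time r since the states only decrease along
   diagonals while the final state is concentrated at height 1. *)

Lemma big_ord_vanishing (F : nat -> nat) n m : (n <= m)%N ->
  (forall k, (n <= k < m)%N -> F k = 0%N) ->
  (\sum_(k < m) F k)%N = (\sum_(k < n) F k)%N.
Proof.
move=> le_nm F0; rewrite -!(big_mkord xpredT) (@big_cat_nat _ _ _ n) //=.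
by rewrite [X in (_ + X)%N]big1_seq ?addn0 // => k /andP[_]; rewrite mem_index_iota => /F0.
Qed.

Lemma has_card_bij (T U : Type) (A : T -> Prop) (B : U -> Prop) (f : T -> U) (g : U -> T) :
  (forall x, A x -> B (f x)) -> (forall y, B y -> A (g y)) ->
  (forall x, A x -> g (f x) = x) -> (forall y, B y -> f (g y) = y) ->
  forall N, has_card A N -> has_card B N.
Proof.
move=> fAB gBA fK gK N [e [e_inj eA]]; have Ae i : A (e i) by apply/eA; exists i.
exists (f \o e); split; first by move=> i j /(congr1 g); rewrite /= !fK // => /e_inj.
move=> y; split => [By | [i <-]]; last exact: fAB.
by have [i ei] := (eA _).1 (gBA _ By); exists i; rewrite /= ei gK.
Qed.

Section RootMultisets.

Variable r : nat.
Implicit Types (m : mset r) (mu : 'rV[int]_r.+1).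

Definition mset_pos m := forall pq : 'I_r.+1 * 'I_r.+1, ~~ (pq.1 < pq.2)%N -> m pq = 0%N.

Definition root_mult m (p q : nat) : nat :=
  if ((p < q) && (q <= r))%N then m (inord p, inord q) else 0%N.

Definition root_outdeg m (p : nat) : nat := (\sum_(q < r.+1) root_mult m p q)%N.
Definition root_indeg m (q : nat) : nat := (\sum_(p < q) root_mult m p q)%N.

Definition root_weight m : 'rV[int]_r.+1 :=
  \sum_(pq : 'I_r.+1 * 'I_r.+1) (eps pq.1 - eps pq.2) *+ m pq.

Lemma root_mult0 m p q : ~~ ((p < q) && (q <= r))%N -> root_mult m p q = 0%N.
Proof. by rewrite /root_mult => /negbTE ->. Qed.

Lemma root_mult_ord m (p q : 'I_r.+1) : mset_pos m -> root_mult m p q = m (p, q).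
Proof.
move=> m_pos; rewrite /root_mult (leq_ord q) andbT !inord_val.
by case: ifP => // /negbT /(m_pos (p, q)).
Qed.

Lemma root_outdeg_last m : root_outdeg m r = 0%N.
Proof. by apply: big1 => q _; rewrite root_mult0 // negb_and -leqNgt orbN. Qed.

Lemma root_outdegE m p :
  root_outdeg m p = (\sum_(k < r) root_mult m p (p + k).+1)%N.
Proof.
rewrite /root_outdeg -(@big_ord_vanishing (root_mult m p) r.+1 (p.+1 + r)); last first.
- by move=> k /andP[lt_rk _]; rewrite root_mult0 //; lia.
- by rewrite addSn ltnS leq_addl.
rewrite -!(big_mkord xpredT) (@big_cat_nat _ _ _ p.+1) //= ?leq_addr //.
rewrite big1_seq ?add0n; last first.
  move=> k /andP[_]; rewrite mem_index_iota => /andP[_ lt_kp].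
  by rewrite root_mult0 // negb_and -leqNgt -ltnS lt_kp.
rewrite -{1}(add0n p.+1) big_addn addKn big_mkord.
by apply: eq_bigr => k _; rewrite addnS addnC.
Qed.

Lemma root_weightE m (j : 'I_r.+1) : mset_pos m ->
  root_weight m 0 j = (root_outdeg m j)%:Z - (root_indeg m j)%:Z.
Proof.
move=> m_pos; have outE : root_outdeg m j = (\sum_(q : 'I_r.+1) m (j, q))%N.
  by apply: eq_bigr => q _; rewrite root_mult_ord.
have inE : root_indeg m j = (\sum_(p : 'I_r.+1) m (p, j))%N.
  rewrite /root_indeg -(@big_ord_vanishing (root_mult m ^~ j) j r.+1) 1?ltnW //.
    by apply: eq_bigr => p _; rewrite root_mult_ord.
  by move=> k /andP[le_jk _]; rewrite root_mult0 // negb_and -leqNgt le_jk.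
rewrite outE inE summxE.
under eq_bigr => pq _ do rewrite mulmxnE !mxE eqxx /= mulrnBl.
rewrite sumrB; congr (_ - _).
  rewrite (eq_bigr (fun pq => (j == pq.1)%:R *+ m (pq.1, pq.2))); last by case.
  rewrite -(pair_bigA _ (fun p q => (j == p)%:R *+ m (p, q))) /=.
  rewrite (bigD1 j) //= [X in _ + X]big1 ?addr0; last first.
    by move=> p ne_pj; apply: big1 => q _; rewrite eq_sym (negbTE ne_pj) mul0rn.
  by rewrite -natz natr_sum; apply: eq_bigr => q _; rewrite eqxx.
rewrite (eq_bigr (fun pq => (j == pq.2)%:R *+ m (pq.1, pq.2))); last by case.
rewrite -(pair_bigA _ (fun p q => (j == q)%:R *+ m (p, q))) /=.
rewrite -natz natr_sum; apply: eq_bigr => p _.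
rewrite (bigD1 j) //= big1 ?addr0 ?eqxx //.
by move=> q ne_qj; rewrite eq_sym (negbTE ne_qj) mul0rn.
Qed.

Lemma in_PE mu m : mset_pos m ->
  in_P mu m <-> forall j : 'I_r.+1, mu 0 j = (root_outdeg m j)%:Z - (root_indeg m j)%:Z.
Proof.
move=> m_pos; split => [[_ <-] j | mu_m]; first exact: root_weightE.
by split => //; apply/matrixP => i j; rewrite ord1 -/(root_weight m) root_weightE.
Qed.

Lemma sum_but_last_coords mu : \sum_(i < r.+1) mu 0 i = 0 ->
  \sum_(i < r.+1 | (i < r)%N) mu 0 i = - mu 0 ord_max.
Proof.
rewrite (bigID (fun i : 'I_r.+1 => (i < r)%N)) /= [X in _ + X](big_pred1 ord_max).
  by move/eqP; rewrite addr_eq0 => /eqP.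
move=> i /=; rewrite -leqNgt.
by apply/idP/eqP => [le_ri|->] //; apply/val_inj/eqP; rewrite /= eqn_leq le_ri -ltnS ltn_ord.
Qed.

Lemma init_state_ge mu k : (r <= k)%N -> init_state mu k = 0.
Proof. by rewrite /init_state leqNgt => /negbTE ->. Qed.

Fixpoint replay mu m (i : nat) : state :=
  if i is i.+1 then fun k => replay mu m i k.+1 + (root_mult m i (i + k)%N.+1)%:Z
  else init_state mu.

Definition replay_js mu m : seq state := mkseq (replay mu m) r.+1.

Lemma replayE mu m i k :
  replay mu m i k = init_state mu (k + i)%N + (\sum_(p < i) root_mult m p (k + i))%N%:Z.
Proof.
elim: i k => [|i IHi] k /=; first by rewrite big_ord0 addr0 addn0.
by rewrite IHi big_ord_recr /= PoszD addrA addSn addnS (addnC i k).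
Qed.

Lemma replay0 mu m i : replay mu m i 0 = init_state mu i + (root_indeg m i)%:Z.
Proof. by rewrite replayE add0n. Qed.

Lemma replay_last mu m k : (0 < k)%N -> replay mu m r k = 0.
Proof.
move=> k_gt0; rewrite replayE init_state_ge ?leq_addl // add0r big1 // => p _.
by rewrite root_mult0 //; lia.
Qed.

Lemma nth_replay_js mu m i : (i <= r)%N -> nth_state (replay_js mu m) i = replay mu m i.
Proof. by move=> le_ir; rewrite /nth_state nth_mkseq. Qed.

Lemma juggling_step_replay mu m i :
  juggling_step (replay mu m i) (replay mu m i.+1) <->
  (root_outdeg m i)%:Z = replay mu m i 0.
Proof.
have throws0 k : (r <= k)%N -> root_mult m i (i + k).+1 = 0%N.
  by move=> le_rk; rewrite root_mult0 //; lia.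
split => [[c [N [c0 [<- step]]]] | outE].
  have cE k : c k = root_mult m i (i + k).+1 by move: (step k) => /= /addrI [].
  rewrite root_outdegE; congr Posz.
  rewrite -(@big_ord_vanishing c N (N + r)) ?leq_addr //; last by move=> k /andP[/c0].
  rewrite (@big_ord_vanishing c r (N + r)) ?leq_addl //; last by move=> k /andP[/throws0 + _]; rewrite cE.
  by apply: eq_bigr => k _; rewrite cE.
exists (fun k => root_mult m i (i + k).+1), r.
by split; [exact: throws0 | rewrite -root_outdegE].
Qed.

Lemma is_js_replay mu m : \sum_(i < r.+1) mu 0 i = 0 -> mset_pos m ->
  is_js (init_state mu) (final_state mu) r (replay_js mu m) <-> in_P mu m.
Proof.
move=> mu0 m_pos; have mu_last := sum_but_last_coords mu0.
have ord_lastE (j : 'I_r.+1) : (r <= j)%N -> j = ord_max.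
  by move=> le_rj; apply/val_inj/eqP; rewrite /= eqn_leq le_rj -ltnS ltn_ord.
rewrite in_PE //; split.
- case=> _ [_ [/(congr1 (fun s => s 0%N)) last_js step]] j.
  have [lt_jr | /ord_lastE -> /=] := ltnP j r; last first.
    move: last_js; rewrite nth_replay_js // replay0 init_state_ge // add0r.
    by rewrite /final_state /= mu_last root_outdeg_last => ->; rewrite sub0r opprK.
  move: (step j lt_jr); rewrite !nth_replay_js ?(ltnW lt_jr) //.
  move/juggling_step_replay => ->; rewrite replay0 /init_state lt_jr inord_val.
  by rewrite addrK.
- move=> mu_m; split; first by rewrite size_mkseq.
  split; first by rewrite nth_replay_js.
  split.
    rewrite nth_replay_js //; apply: functional_extensionality => -[|k].
      rewrite replay0 init_state_ge // add0r /final_state /= mu_last mu_m.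
      by rewrite root_outdeg_last sub0r opprK.
    by rewrite replay_last.
  move=> i lt_ir; rewrite !nth_replay_js ?(ltnW lt_ir) //.
  apply/juggling_step_replay; rewrite replay0 /init_state lt_ir.
  have := mu_m (inord i); rewrite inordK ?ltnS ?(ltnW lt_ir) // => ->.
  by rewrite subrK.
Qed.

Lemma js_to_mset_pos ss : mset_pos (js_to_mset r ss).
Proof. by move=> pq /negbTE npq; rewrite ffunE npq. Qed.

Lemma js_to_mset_replay mu m : mset_pos m -> js_to_mset r (replay_js mu m) = m.
Proof.
move=> m_pos; apply/ffunP => -[p q]; rewrite ffunE.
case: ifP => [lt_pq | /negbT npq]; last by rewrite m_pos.
rewrite (@nth_replay_js mu m (p, q).1.+1) ?(leq_trans lt_pq (leq_ord q)) //.
rewrite (@nth_replay_js mu m (p, q).1) ?leq_ord //=; rewrite /= in lt_pq.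
have Sd : ((q - p).-1).+1 = (q - p)%N by rewrite prednK // subn_gt0.
rewrite Sd addrAC subrr add0r.
by rewrite -addnS Sd subnKC ?(ltnW lt_pq) // root_mult_ord.
Qed.

End RootMultisets.

Section JugglingSequences.

Variables (r : nat) (mu : 'rV[int]_r.+1) (ss : seq state).
Hypothesis ss_js : is_js (init_state mu) (final_state mu) r ss.

Local Notation s := (nth_state ss).

Lemma js_step_le i k : (i < r)%N -> s i k.+1 <= s i.+1 k.
Proof.
case: ss_js => _ [_ [_ step]] lt_ir.
by case: (step i lt_ir) => c [N [_ [_ ->]]]; rewrite lerDl.
Qed.

Lemma js_diag_le d i k : (i + d <= r)%N -> s i (k + d)%N <= s (i + d)%N k.
Proof.
elim: d i k => [|d IHd] i k le_idr; first by rewrite !addn0.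
rewrite addnS -addSn (le_trans (IHd i k.+1 _)) ?(leq_trans _ le_idr) ?leq_add2l //.
by rewrite addnS js_step_le // -addnS.
Qed.

(* A ball thrown at time i+1 to height k+1 with i+k >= r would still be in the
   air at time r, where the state is concentrated at height 1. *)
Lemma js_no_late_throw i k : (i < r)%N -> (r <= i + k)%N -> s i.+1 k = s i k.+1.
Proof.
case: ss_js => _ [s0 [sr _]] lt_ir le_rik.
apply/eqP; rewrite eq_le js_step_le // andbT.
have le_s0 : s i.+1 k <= 0.
  have [d def_r] : exists d, r = (i.+1 + d)%N by exists (r - i.+1)%N; lia.
  have [k' def_k] : exists k', k = (k'.+1 + d)%N by exists (k - d).-1; lia.
  by have := @js_diag_le d i.+1 k'.+1; rewrite -def_r -def_k sr /final_state; apply.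
apply: (le_trans le_s0); have := @js_diag_le i 0 k.+1; rewrite add0n s0 init_state_ge.
  by apply; exact: ltnW.
by rewrite addnC addnS leqW.
Qed.

Lemma js_replay i : (i <= r)%N -> s i = replay mu (js_to_mset r ss) i.
Proof.
case: ss_js => _ [s0 _]; elim: i => [_ | i IHi lt_ir]; first by rewrite s0.
apply: functional_extensionality => k; rewrite [RHS]/= -IHi ?(ltnW lt_ir) //.
have [le_ikr | lt_rik] := leqP (i + k).+1 r; last first.
  by rewrite root_mult0 ?addr0 ?js_no_late_throw //; lia.
rewrite /root_mult ltnS leq_addr le_ikr ffunE [(_, _).1]/= [(_, _).2]/=.
rewrite !inordK ?ltnS ?(ltnW lt_ir) // leq_addr -addnS addKn succnK.
by rewrite gez0_abs ?subr_ge0 ?js_step_le // addrCA subrr addr0.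
Qed.

Lemma js_to_msetK : replay_js mu (js_to_mset r ss) = ss.
Proof.
case: ss_js => size_ss _; apply: (@eq_from_nth _ (fun _ => 0)); first by rewrite size_mkseq.
by move=> i; rewrite size_mkseq ltnS => le_ir; rewrite nth_mkseq // -js_replay.
Qed.

End JugglingSequences.

Theorem mainTheorem4 (r : nat) (hr : (1 <= r)%N) (mu : 'rV[int]_r.+1)
  (hmu : \sum_(i < r.+1) mu 0 i = 0) :
  let a := init_state mu in
  let b := final_state mu in
  (forall ss, is_js a b r ss -> in_P mu (js_to_mset r ss)) /\
  (forall ss1 ss2, is_js a b r ss1 -> is_js a b r ss2 ->
     js_to_mset r ss1 = js_to_mset r ss2 -> ss1 = ss2) /\
  (forall m : mset r, in_P mu m -> exists2 ss, is_js a b r ss & js_to_mset r ss = m) /\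
  (forall N : nat, has_card (is_js a b r) N <-> has_card (in_P mu) N).
Proof.
move=> a b; rewrite {}/a {}/b.
have js_in_P ss : is_js (init_state mu) (final_state mu) r ss -> in_P mu (js_to_mset r ss).
  move=> ss_js; apply: (is_js_replay hmu (@js_to_mset_pos r ss)).1.
  by rewrite (js_to_msetK ss_js).
have in_P_js m : in_P mu m -> is_js (init_state mu) (final_state mu) r (replay_js mu m).
  by move=> mP; apply: (is_js_replay hmu mP.1).2.
have replayK m : in_P mu m -> js_to_mset r (replay_js mu m) = m.
  by move=> mP; rewrite js_to_mset_replay //; case: mP.
split => //; split.
  by move=> ss1 ss2 /js_to_msetK E1 /js_to_msetK E2 E; rewrite -E1 -E2 E.
split; first by move=> m mP; exists (replay_js mu m); auto.
move=> N; split; first exact: (has_card_bij js_in_P in_P_js (@js_to_msetK r mu) replayK).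
exact: (has_card_bij in_P_js js_in_P replayK (@js_to_msetK r mu)).
Qed.
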